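(* Assume $\mu<1$. Then for every integer $r\ge1$, $$\mathbf{P}[M=r]\le\frac{p_r}{1-\mu}.$$ In particular $\mathbf{E}[M]<\infty$.
   Context: Let $p=(p_0,p_1,p_2,\dots)$ be a probability distribution on the nonnegative integers with mean $\mu=\sum_k kp_k\in(0,\infty)$, and let $\tau(p)$ be a Galton–Watson tree with offspring distribution $p$: it starts with a single root at generation $0$, and every vertex independently has $k$ children with probability $p_k$. The out-degree of a vertex is its number of children. $M_n$ denotes the maximal out-degree among the vertices of generation $n$ (with $M_n=0$ if generation $n$ is empty), and $M=\sup_{n\ge0}M_n$ is the global maximal out-degree. *)

From Stdlib Require Import Reals Lra List.
Open Scope R_scope.

(* Finite rooted plane (ordered) trees: a vertex is the list of its
   children subtrees; its out-degree is the length of that list. *)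
Inductive tree : Type := Node : list tree -> tree.

(* Galton--Watson law of a finite plane tree:
   P[tau(p) = t] = prod over vertices v of t of p_(outdeg v). *)
Fixpoint gw_weight (p : nat -> R) (t : tree) : R :=
  match t with
  | Node ts =>
      p (length ts) *
      (fix wl (l : list tree) : R :=
         match l with
         | nil => 1
         | t' :: l' => gw_weight p t' * wl l'
         end) ts
  end.

Fixpoint maxdeg (t : tree) : nat :=
  match t with
  | Node ts =>
      Nat.max (length ts)
        ((fix ml (l : list tree) : nat :=
            match l with
            | nil => 0%nat
            | t' :: l' => Nat.max (maxdeg t') (ml l')
            end) ts)
  end.

Definition offspring_dist (p : nat -> R) (mu : R) : Prop :=
  (forall k, 0 <= p k) /\ infinite_sum p 1 /\
  infinite_sum (fun k => INR k * p k) mu.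

Definition lsum (f : tree -> R) (l : list tree) : R :=
  fold_right (fun t s => f t + s) 0 l.

(* Countable sum of the nonnegative function f over the set A of finite
   trees, as the supremum of finite partial sums: is_tree_sum f A s
   means sum_{t in A} f t = s (in particular it is finite). *)
Definition is_tree_sum (f : tree -> R) (A : tree -> Prop) (s : R) : Prop :=
  is_lub (fun x => exists l, NoDup l /\ (forall t, In t l -> A t) /\
                             x = lsum f l) s.

(* P[M = r] for the (a.s. finite) GW tree *)
Definition prob_M_eq (p : nat -> R) (r : nat) (x : R) : Prop :=
  is_tree_sum (gw_weight p) (fun t => maxdeg t = r) x.

Definition expect_M (p : nat -> R) (x : R) : Prop :=
  is_tree_sum (fun t => INR (maxdeg t) * gw_weight p t) (fun _ => True) x.

From Stdlib Require Import Reals Lra Lia List.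
Open Scope R_scope.

(* For g >= 0 put W_g(F) := E[sum over the vertices v of F of g(outdeg v)] for a
   Galton--Watson forest F of c independent trees.  Removing the first root
   (depth-first exploration) costs E[g(xi)] and leaves a forest of c - 1 + xi
   trees with E[xi] = mu, so induction on the number of vertices gives
   W_g <= c E[g(xi)] / (1 - mu).  The maximal out-degree M is the out-degree of
   some vertex, hence g(M) <= sum_v g(outdeg v); g = 1_{r} bounds P[M = r] by
   p_r / (1 - mu), and g(k) = k bounds E[M] by mu / (1 - mu). *)

Fixpoint tree_nested_ind (P : tree -> Prop)
  (HP : forall ts, Forall P ts -> P (Node ts)) (t : tree) : P t :=
  match t with
  | Node ts => HP ts ((fix all_children (l : list tree) : Forall P l :=
      match l with
      | nil => Forall_nil P
      | t' :: l' => Forall_cons t' (tree_nested_ind P HP t') (all_children l')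
      end) ts)
  end.

Definition sumR {A : Type} (f : A -> R) (l : list A) : R :=
  fold_right (fun x s => f x + s) 0 l.

Lemma lsum_sumR (f : tree -> R) (l : list tree) : lsum f l = sumR f l.
Proof. reflexivity. Qed.

Lemma sumR_app {A : Type} (f : A -> R) (l1 l2 : list A) :
  sumR f (l1 ++ l2) = sumR f l1 + sumR f l2.
Proof. induction l1 as [|x l1 IH]; simpl; [ring | rewrite IH; ring]. Qed.

Lemma sumR_ext {A : Type} (f g : A -> R) (l : list A) :
  (forall x, In x l -> f x = g x) -> sumR f l = sumR g l.
Proof.
  induction l as [|x l IH]; intros Hfg; simpl; [reflexivity|].
  rewrite Hfg, IH by auto with datatypes. reflexivity.
Qed.

Lemma sumR_le {A : Type} (f g : A -> R) (l : list A) :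
  (forall x, In x l -> f x <= g x) -> sumR f l <= sumR g l.
Proof.
  induction l as [|x l IH]; intros Hfg; simpl; [lra|].
  apply Rplus_le_compat; auto with datatypes.
Qed.

Lemma sumR_nonneg {A : Type} (f : A -> R) (l : list A) :
  (forall x, In x l -> 0 <= f x) -> 0 <= sumR f l.
Proof.
  induction l as [|x l IH]; intros Hf; simpl; [lra|].
  apply Rplus_le_le_0_compat; auto with datatypes.
Qed.

Lemma sumR_ge_term {A : Type} (f : A -> R) (l : list A) (x : A) :
  (forall y, In y l -> 0 <= f y) -> In x l -> f x <= sumR f l.
Proof.
  induction l as [|y l IH]; intros Hf Hx; simpl; [contradiction|].
  assert (0 <= sumR f l) by (apply sumR_nonneg; auto with datatypes).
  destruct Hx as [<- | Hx]; [lra|].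
  assert (f x <= sumR f l) by auto with datatypes.
  specialize (Hf y (or_introl eq_refl)). lra.
Qed.

Lemma sumR_scal {A : Type} (a : R) (f : A -> R) (l : list A) :
  sumR (fun x => a * f x) l = a * sumR f l.
Proof. induction l as [|x l IH]; simpl; [ring | rewrite IH; ring]. Qed.

Lemma sumR_plus {A : Type} (f g : A -> R) (l : list A) :
  sumR (fun x => f x + g x) l = sumR f l + sumR g l.
Proof. induction l as [|x l IH]; simpl; [ring | rewrite IH; ring]. Qed.

Lemma sumR_map {A B : Type} (f : B -> R) (h : A -> B) (l : list A) :
  sumR f (map h l) = sumR (fun x => f (h x)) l.
Proof. induction l as [|x l IH]; simpl; [ring | rewrite IH; ring]. Qed.

Lemma sum_f_R0_single (j : nat) (x : R) (K : nat) :
  sum_f_R0 (fun d => if Nat.eqb j d then x else 0) K = if Nat.leb j K then x else 0.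
Proof.
  induction K as [|K IH]; cbn [sum_f_R0].
  - destruct j; reflexivity.
  - rewrite IH.
    destruct (Nat.leb_spec j K), (Nat.eqb_spec j (S K)), (Nat.leb_spec j (S K));
      first [lia | ring].
Qed.

Lemma list_bounded {A : Type} (f : A -> nat) (l : list A) :
  exists N, forall x, In x l -> (f x <= N)%nat.
Proof.
  induction l as [|y l [N HN]]; [exists 0%nat; simpl; tauto|].
  exists (Nat.max (f y) N). intros x [<- | Hx]; [lia|]. specialize (HN x Hx). lia.
Qed.

Lemma app_inj_length {A : Type} (l1 l2 m1 m2 : list A) :
  length l1 = length m1 -> l1 ++ l2 = m1 ++ m2 -> l1 = m1 /\ l2 = m2.
Proof.
  revert m1; induction l1 as [|x l1 IH]; intros [|y m1] Hlen Heq; try discriminate; auto.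
  injection Heq as -> Heq. injection Hlen as Hlen.
  destruct (IH m1 Hlen Heq) as [-> ->]. auto.
Qed.

Definition forest_weight (p : nat -> R) (F : list tree) : R :=
  fold_right (fun t w => gw_weight p t * w) 1 F.

Fixpoint vertex_sum (g : nat -> R) (t : tree) : R :=
  match t with Node ts => g (length ts) + sumR (vertex_sum g) ts end.

Definition forest_vertex_sum (g : nat -> R) (F : list tree) : R := sumR (vertex_sum g) F.

Fixpoint tree_size (t : tree) : nat :=
  match t with Node ts => S (list_sum (map tree_size ts)) end.

Definition forest_size (F : list tree) : nat := list_sum (map tree_size F).

Lemma gw_weight_Node (p : nat -> R) (ts : list tree) :
  gw_weight p (Node ts) = p (length ts) * forest_weight p ts.
Proof. simpl; f_equal; induction ts; simpl; congruence. Qed.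

Lemma maxdeg_Node (ts : list tree) :
  maxdeg (Node ts) = Nat.max (length ts) (list_max (map maxdeg ts)).
Proof. simpl; f_equal; induction ts; simpl; congruence. Qed.

Lemma forest_weight_app (p : nat -> R) (F G : list tree) :
  forest_weight p (F ++ G) = forest_weight p F * forest_weight p G.
Proof. induction F as [|t F IH]; simpl; [ring | rewrite IH; ring]. Qed.

Lemma gw_weight_nonneg (p : nat -> R) (t : tree) :
  (forall k, 0 <= p k) -> 0 <= gw_weight p t.
Proof.
  intros Hp. induction t as [ts IH] using tree_nested_ind.
  rewrite gw_weight_Node. apply Rmult_le_pos; [apply Hp|].
  induction IH; simpl; [lra | apply Rmult_le_pos; assumption].
Qed.

Lemma list_max_map_attained {A : Type} (h : A -> nat) (l : list A) :
  l <> nil -> exists x, In x l /\ list_max (map h l) = h x.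
Proof.
  induction l as [|x l IH]; intros Hl; [congruence|].
  destruct l as [|y l]; [exists x; simpl; split; [auto | lia]|].
  destruct (IH ltac:(discriminate)) as [z [Hz Hmax]].
  change (list_max (map h (x :: y :: l))) with (Nat.max (h x) (list_max (map h (y :: l)))).
  destruct (Nat.max_spec (h x) (list_max (map h (y :: l)))) as [[_ ->] | [_ ->]].
  - exists z; auto with datatypes.
  - exists x; auto with datatypes.
Qed.

Lemma vertex_sum_nonneg (g : nat -> R) (t : tree) :
  (forall k, 0 <= g k) -> 0 <= vertex_sum g t.
Proof.
  intros Hg. induction t as [ts IH] using tree_nested_ind. simpl.
  rewrite Forall_forall in IH.
  apply Rplus_le_le_0_compat; [apply Hg | apply sumR_nonneg; assumption].
Qed.

Lemma vertex_sum_ge_maxdeg (g : nat -> R) (t : tree) :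
  (forall k, 0 <= g k) -> g (maxdeg t) <= vertex_sum g t.
Proof.
  intros Hg. induction t as [ts IH] using tree_nested_ind.
  rewrite Forall_forall in IH. rewrite maxdeg_Node. simpl.
  assert (Hchildren : 0 <= sumR (vertex_sum g) ts).
  { apply sumR_nonneg. intros t _. apply vertex_sum_nonneg, Hg. }
  destruct (Nat.max_spec (length ts) (list_max (map maxdeg ts))) as [[Hlt ->] | [_ ->]];
    [|lra].
  assert (Hts : ts <> nil) by (intros ->; simpl in Hlt; lia).
  destruct (list_max_map_attained maxdeg ts Hts) as [t [Ht ->]].
  apply (Rle_trans _ (vertex_sum g t)); [auto|].
  pose proof (Hg (length ts)).
  enough (vertex_sum g t <= sumR (vertex_sum g) ts) by lra.
  apply sumR_ge_term; [intros; apply vertex_sum_nonneg|]; assumption.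
Qed.

Definition first_degree (F : list tree) : nat :=
  match F with Node ts :: _ => length ts | nil => 0%nat end.

Definition explore (F : list tree) : list tree :=
  match F with Node ts :: F' => ts ++ F' | nil => nil end.

Lemma forest_weight_explore (p : nat -> R) (F : list tree) : F <> nil ->
  forest_weight p F = p (first_degree F) * forest_weight p (explore F).
Proof.
  destruct F as [|[ts] F]; [congruence|]. intros _. simpl explore.
  rewrite forest_weight_app. cbn [forest_weight fold_right].
  fold (forest_weight p F). rewrite gw_weight_Node. simpl. ring.
Qed.

Lemma forest_vertex_sum_explore (g : nat -> R) (F : list tree) : F <> nil ->
  forest_vertex_sum g F = g (first_degree F) + forest_vertex_sum g (explore F).
Proof.
  destruct F as [|[ts] F]; [congruence|]. intros _.
  unfold forest_vertex_sum. simpl. rewrite sumR_app. ring.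
Qed.

Lemma forest_size_explore (F : list tree) : F <> nil ->
  forest_size F = S (forest_size (explore F)).
Proof.
  destruct F as [|[ts] F]; [congruence|]. intros _.
  unfold forest_size. simpl. rewrite map_app, list_sum_app. reflexivity.
Qed.

Lemma length_explore (F : list tree) : F <> nil ->
  (length (explore F) + 1 = first_degree F + length F)%nat.
Proof.
  destruct F as [|[ts] F]; [congruence|]. intros _. simpl. rewrite length_app. lia.
Qed.

Lemma explore_inj (F G : list tree) : F <> nil -> G <> nil ->
  first_degree F = first_degree G -> explore F = explore G -> F = G.
Proof.
  destruct F as [|[ts] F], G as [|[ts'] G]; try congruence. simpl. intros _ _ Hd Heq.
  destruct (app_inj_length ts F ts' G Hd Heq) as [-> ->]. reflexivity.
Qed.

Definition degree_class (L : list (list tree)) (d : nat) : list (list tree) :=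
  filter (fun F => Nat.eqb (first_degree F) d) L.

Lemma sumR_degree_classes (h : list tree -> R) (L : list (list tree)) (K : nat) :
  (forall F, In F L -> (first_degree F <= K)%nat) ->
  sumR h L = sum_f_R0 (fun d => sumR h (degree_class L d)) K.
Proof.
  induction L as [|F L IH]; intros HK.
  - simpl. rewrite sum_cte. ring.
  - rewrite (sum_eq _ (fun d => (if Nat.eqb (first_degree F) d then h F else 0)
                               + sumR h (degree_class L d))).
    + rewrite sum_plus, sum_f_R0_single, <- IH by auto with datatypes.
      replace (Nat.leb (first_degree F) K) with true
        by (symmetry; apply Nat.leb_le; auto with datatypes).
      reflexivity.
    + intros d _. simpl. destruct (Nat.eqb (first_degree F) d); simpl; ring.
Qed.

Lemma sumR_explore (h : list tree -> R) (k : nat -> list tree -> R)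
    (L : list (list tree)) (K : nat) :
  (forall F, In F L -> F <> nil /\ (first_degree F <= K)%nat) ->
  (forall F, F <> nil -> h F = k (first_degree F) (explore F)) ->
  sumR h L = sum_f_R0 (fun d => sumR (k d) (map explore (degree_class L d))) K.
Proof.
  intros HS Hhk. rewrite (sumR_degree_classes h L K) by (intros; apply HS; assumption).
  apply sum_eq. intros d _. rewrite sumR_map. apply sumR_ext.
  intros F HF. apply filter_In in HF as [HF Hd]. apply Nat.eqb_eq in Hd.
  rewrite Hhk, Hd by (apply HS; assumption). reflexivity.
Qed.

(* Finite sets of forests are duplicate-free lists; [n] is the induction measure. *)
Definition small_forests (c n : nat) (L : list (list tree)) : Prop :=
  NoDup L /\ forall F, In F L -> length F = c /\ (forest_size F < n)%nat.

Lemma small_forests_0 (c : nat) (L : list (list tree)) :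
  small_forests c 0 L -> L = nil.
Proof.
  intros [_ HS]. destruct L as [|F L]; [reflexivity|].
  destruct (HS F (or_introl eq_refl)). lia.
Qed.

Lemma small_forests_succ_nonempty (c n : nat) (L : list (list tree)) :
  small_forests (S c) n L -> forall F, In F L -> F <> nil.
Proof. intros [_ HL] F HF ->. destruct (HL nil HF). discriminate. Qed.

Lemma small_forests_without_trees (n : nat) (L : list (list tree)) :
  small_forests 0 n L -> L = nil \/ L = nil :: nil.
Proof.
  intros [Hnd HS].
  assert (Hnil : forall F, In F L -> F = nil)
    by (intros F HF; apply length_zero_iff_nil, HS, HF).
  destruct L as [|F [|G L]]; auto.
  - right. rewrite (Hnil F) by auto with datatypes. reflexivity.
  - exfalso. inversion_clear Hnd as [|? ? Hnotin].
    apply Hnotin. rewrite (Hnil F), (Hnil G) by auto with datatypes. auto with datatypes.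
Qed.

Lemma small_forests_explore (c n d : nat) (L : list (list tree)) :
  small_forests (S c) (S n) L -> small_forests (d + c) n (map explore (degree_class L d)).
Proof.
  intros [Hnd HS].
  assert (Hclass : forall F, In F (degree_class L d) ->
            F <> nil /\ first_degree F = d /\ length F = S c /\ (forest_size F < S n)%nat).
  { intros F HF. apply filter_In in HF as [HF Hd]. apply Nat.eqb_eq in Hd.
    destruct (HS F HF) as [Hlen Hsize].
    repeat split; try assumption. intros ->. discriminate. }
  split.
  - apply NoDup_map_NoDup_ForallPairs; [|apply NoDup_filter, Hnd].
    intros F G HF HG. destruct (Hclass F HF) as [HF0 [HFd _]], (Hclass G HG) as [HG0 [HGd _]].
    apply explore_inj; congruence.
  - intros G HG. apply in_map_iff in HG as [F [<- HF]].
    destruct (Hclass F HF) as [HF0 [HFd [Hlen Hsize]]].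
    pose proof (length_explore F HF0). rewrite forest_size_explore in Hsize by assumption.
    split; lia.
Qed.

Section ExpectedVertexSum.

Variables (p : nat -> R) (mu : R).
Hypotheses (p_nonneg : forall k, 0 <= p k)
  (p_mass : forall K, sum_f_R0 p K <= 1)
  (p_mean : forall K, sum_f_R0 (fun k => INR k * p k) K <= mu)
  (mu_lt_1 : mu < 1).

Lemma small_forests_weight_le_1 (n : nat) : forall c L,
  small_forests c n L -> sumR (forest_weight p) L <= 1.
Proof.
  induction n as [|n IH]; intros c L HL.
  - rewrite (small_forests_0 c L HL). simpl. lra.
  - destruct c as [|c].
    + destruct (small_forests_without_trees _ _ HL) as [-> | ->]; simpl; lra.
    + destruct (list_bounded first_degree L) as [K HK].
      rewrite (sumR_explore _ (fun d G => p d * forest_weight p G) L K).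
      * apply (Rle_trans _ (sum_f_R0 p K)); [|apply p_mass].
        apply sum_Rle. intros d _. rewrite sumR_scal.
        pose proof (IH _ _ (small_forests_explore c n d L HL)).
        pose proof (p_nonneg d). nra.
      * intros F HF. split; [exact (small_forests_succ_nonempty c _ L HL F HF) | auto].
      * apply forest_weight_explore.
Qed.

Variables (g : nat -> R) (A : R).
Hypotheses (g_nonneg : forall k, 0 <= g k)
  (g_mean : forall K, sum_f_R0 (fun k => g k * p k) K <= A).

Lemma small_forests_vertex_sum_le (n : nat) : forall c L,
  small_forests c n L ->
  sumR (fun F => forest_vertex_sum g F * forest_weight p F) L <= INR c * (A / (1 - mu)).
Proof.
  set (B := A / (1 - mu)).
  assert (HA : A = B * (1 - mu)) by (unfold B; field; lra).
  assert (HB : 0 <= B).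
  { pose proof (g_mean 0). pose proof (Rmult_le_pos _ _ (g_nonneg 0) (p_nonneg 0)).
    simpl in *. unfold B, Rdiv. apply Rmult_le_pos; [lra|].
    apply Rlt_le, Rinv_0_lt_compat. lra. }
  induction n as [|n IH]; intros c L HL.
  - rewrite (small_forests_0 c L HL). simpl. pose proof (pos_INR c). nra.
  - destruct c as [|c].
    + destruct (small_forests_without_trees _ _ HL) as [-> | ->];
        unfold forest_vertex_sum; simpl; lra.
    + destruct (list_bounded first_degree L) as [K HK].
      rewrite (sumR_explore _ (fun d G => p d * (g d * forest_weight p G
                                 + forest_vertex_sum g G * forest_weight p G)) L K).
      * (* The root of degree d costs g d and leaves d + c trees; summing over d,
           A + c B + mu B = (c + 1) B. *)
        apply (Rle_trans _ (sum_f_R0 (fun d =>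
                 g d * p d + p d * (INR c * B) + INR d * p d * B) K)).
        -- apply sum_Rle. intros d _. rewrite sumR_scal, sumR_plus, sumR_scal.
           pose proof (small_forests_explore c n d L HL) as Hclass.
           pose proof (small_forests_weight_le_1 _ _ _ Hclass) as Hweight.
           pose proof (IH _ _ Hclass) as Hvertex. rewrite plus_INR in Hvertex.
           pose proof (p_nonneg d). pose proof (g_nonneg d).
           assert (g d * sumR (forest_weight p) (map explore (degree_class L d)) <= g d)
             by nra.
           nra.
        -- rewrite !sum_plus, <- !scal_sum.
           pose proof (g_mean K). pose proof (p_mass K). pose proof (p_mean K).
           pose proof (Rmult_le_pos _ _ (pos_INR c) HB). rewrite S_INR. nra.
      * intros F HF. split; [exact (small_forests_succ_nonempty c _ L HL F HF) | auto].
      * intros F HF. rewrite forest_vertex_sum_explore, forest_weight_explore by assumption.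
        ring.
Qed.

Lemma lsum_maxdeg_le (l : list tree) : NoDup l ->
  lsum (fun t => g (maxdeg t) * gw_weight p t) l <= A / (1 - mu).
Proof.
  intros Hnd. destruct (list_bounded tree_size l) as [N HN].
  assert (Hsingletons : small_forests 1 (S N) (map (fun t => t :: nil) l)).
  { split.
    - apply NoDup_map_NoDup_ForallPairs; [|assumption]. intros t u _ _. congruence.
    - intros F HF. apply in_map_iff in HF as [t [<- Ht]].
      unfold forest_size. simpl. specialize (HN t Ht). split; [reflexivity | lia]. }
  pose proof (small_forests_vertex_sum_le _ _ _ Hsingletons) as Hbound.
  rewrite Rmult_1_l, sumR_map in Hbound.
  rewrite lsum_sumR. refine (Rle_trans _ _ _ _ Hbound). apply sumR_le. intros t _.
  unfold forest_vertex_sum, forest_weight. simpl. rewrite Rplus_0_r, Rmult_1_r.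
  apply Rmult_le_compat_r; [apply gw_weight_nonneg, p_nonneg|].
  apply vertex_sum_ge_maxdeg, g_nonneg.
Qed.

End ExpectedVertexSum.

Lemma is_tree_sum_bounded (f : tree -> R) (P : tree -> Prop) (b : R) :
  (forall l, NoDup l -> (forall t, In t l -> P t) -> lsum f l <= b) ->
  exists s, is_tree_sum f P s /\ s <= b.
Proof.
  intros Hb.
  set (E := fun x => exists l, NoDup l /\ (forall t, In t l -> P t) /\ x = lsum f l).
  assert (HE : forall x, E x -> x <= b) by (intros x [l [Hl [HP ->]]]; auto).
  destruct (completeness E) as [s Hs].
  - exists b. exact HE.
  - exists 0, nil. split; [constructor | split; [contradiction | reflexivity]].
  - exists s. split; [exact Hs | exact (proj2 Hs b HE)].
Qed.

Definition indicator (r k : nat) : R := if Nat.eqb r k then 1 else 0.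

Lemma indicator_nonneg (r k : nat) : 0 <= indicator r k.
Proof. unfold indicator. destruct (Nat.eqb r k); lra. Qed.

Lemma sum_indicator_le (p : nat -> R) (r K : nat) : 0 <= p r ->
  sum_f_R0 (fun k => indicator r k * p k) K <= p r.
Proof.
  intros Hpr.
  rewrite (sum_eq _ (fun k => if Nat.eqb r k then p r else 0)).
  - rewrite sum_f_R0_single. destruct (Nat.leb r K); lra.
  - intros k _. unfold indicator. destruct (Nat.eqb_spec r k) as [-> | _]; ring.
Qed.

Theorem mainTheorem7 (p : nat -> R) (mu : R)
  (Hp : offspring_dist p mu) (Hmu0 : 0 < mu) (Hmu1 : mu < 1) :
  (forall r : nat, (1 <= r)%nat ->
     exists x, prob_M_eq p r x /\ x <= p r / (1 - mu)) /\
  (exists e, expect_M p e).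
Proof.
  destruct Hp as [p_nonneg [p_sum p_mean_sum]].
  assert (p_mass : forall K, sum_f_R0 p K <= 1) by (intros; apply sum_incr; auto).
  assert (p_mean : forall K, sum_f_R0 (fun k => INR k * p k) K <= mu).
  { intros; apply sum_incr; [assumption|]. intros k. apply Rmult_le_pos; auto using pos_INR. }
  split.
  - intros r _. apply is_tree_sum_bounded. intros l Hl Hr.
    rewrite lsum_sumR, <- (sumR_ext (fun t => indicator r (maxdeg t) * gw_weight p t)).
    + apply lsum_maxdeg_le; auto using indicator_nonneg, sum_indicator_le.
    + intros t Ht. unfold indicator. rewrite Hr, Nat.eqb_refl by assumption. ring.
  - destruct (is_tree_sum_bounded (fun t => INR (maxdeg t) * gw_weight p t)
                (fun _ => True) (mu / (1 - mu))) as [e [He _]].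
    + intros l Hl _. apply lsum_maxdeg_le; auto using pos_INR.
    + exists e. exact He.
Qed.
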